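(* Let $g,h\in G_a$ be covered by $\widehat g,\widehat h\in\widehat G_a$ respectively. (1) If $g$ and $h$ both fix a point $x\in X$, then $\widehat{\mathrm{rot}}_{x,\alpha}(\widehat g\widehat h)=\widehat{\mathrm{rot}}_{x,\alpha}(\widehat g)+\widehat{\mathrm{rot}}_{x,\alpha}(\widehat h)$. (2) If $g$ and $h$ both preserve a Borel probability measure $\mu$ on $X$, then $\widehat{\mathrm{rot}}_{\mu,\alpha}(\widehat g\widehat h)=\widehat{\mathrm{rot}}_{\mu,\alpha}(\widehat g)+\widehat{\mathrm{rot}}_{\mu,\alpha}(\widehat h)$, provided each term exists.
   Context: $A$ is $\mathbb{Z}$ or the discrete group $\mathbb{R}$. $X$ is a path-connected space, $a\in\mathrm{H}^1(X;A)$, $\pi\colon\widehat X_a\to X$ a principal $A$-bundle with holonomy $a$, $T_r$ the action of $r\in A$. $\widehat G_a$ is the group of bundle automorphisms of $\widehat X_a$ (homeomorphisms $\widehat g$ with $\pi\circ\widehat g=g\circ\pi$ for a homeomorphism $g$ of $X$, said to cover $g$), and $G_a$ the group of homeomorphisms of $X$ preserving $a$. $\alpha$ is a real singular $1$-cocycle representing $a$, and $\theta\colon\widehat X_a\to\mathbb{R}$ a $0$-cochain with $d\theta=\pi^*\alpha$ and $\theta(T_r\widehat y)=\theta(\widehat y)+r$. For $x\in X$, $\rho_{x,\alpha}(\widehat g)=\theta(\widehat g(\widehat x))-\theta(\widehat x)$ with $\widehat x\in\pi^{-1}(x)$ (independent of choices); $\widehat{\mathrm{rot}}_{x,\alpha}(\widehat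 g)=\lim_{n\to\infty}\rho_{x,\alpha}(\widehat g^n)/n$ when it exists; for a $g$-invariant Borel probability measure $\mu$, $\widehat{\mathrm{rot}}_{\mu,\alpha}(\widehat g)=\int_X\rho_{x,\alpha}(\widehat g)\,d\mu(x)$ when it exists. *)

From HB Require Import structures.
From mathcomp Require Import all_boot all_order all_algebra.
From mathcomp Require Import all_classical all_reals all_analysis.
Set Implicit Arguments. Unset Strict Implicit. Unset Printing Implicit Defensive.
Import Order.TTheory GRing.Theory Num.Theory.
Import numFieldNormedType.Exports.
Local Open Scope classical_set_scope.
Local Open Scope ring_scope.

(* The coefficient group A: either Z or the discrete group R, both viewed
   as subgroups of R (elements of A are reals r with [inA c r]). *)
Inductive coef := CoefZ | CoefR.

Definition inA {R : realType} (c : coef) (r : R) : Prop :=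
  if c is CoefZ then r \is a Num.int else True.

Section Defs.
Context {R : realType}.

(* the standard 1-simplex, identified with [0,1] *)
Definition unit_itv : set R := [set t | 0 <= t <= 1].

(* singular 1-simplices of X: maps R -> X continuous on [0,1]
   (only their restriction to [0,1] matters, see [cochain1_wd]) *)
Definition simplex1 {X : topologicalType} (s : R -> X) : Prop :=
  {within unit_itv, continuous s}.

Definition Delta2 : set (R * R) :=
  [set p | 0 <= p.1 /\ 0 <= p.2 /\ p.1 + p.2 <= 1].

Definition simplex2 {X : topologicalType} (t : R * R -> X) : Prop :=
  {within Delta2, continuous t}.

Definition e0 : R * R := (0, 0).
Definition e1 : R * R := (1, 0).
Definition e2 : R * R := (0, 1).

Definition edge (p q : R * R) : R -> R * R :=
  fun u => ((1 - u) * p.1 + u * q.1, (1 - u) * p.2 + u * q.2).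

Definition cochain1_wd {X : topologicalType} (alpha : (R -> X) -> R) : Prop :=
  forall s s' : R -> X, simplex1 s -> simplex1 s' ->
    (forall t, unit_itv t -> s t = s' t) -> alpha s = alpha s'.

(* real singular 1-cocycle: (d alpha)(tau) = alpha(d0 tau) - alpha(d1 tau)
   + alpha(d2 tau) = 0 for every singular 2-simplex tau *)
Definition cocycle1 {X : topologicalType} (alpha : (R -> X) -> R) : Prop :=
  cochain1_wd alpha /\
  forall tau : R * R -> X, simplex2 tau ->
    alpha (tau \o edge e1 e2) - alpha (tau \o edge e0 e2)
      + alpha (tau \o edge e0 e1) = 0.

(* d theta = pi^* alpha, for a 0-cochain theta on Y *)
Definition d_theta_eq {X Y : topologicalType} (pi : Y -> X)
    (alpha : (R -> X) -> R) (theta : Y -> R) : Prop :=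
  forall s : R -> Y, simplex1 s -> theta (s 1) - theta (s 0) = alpha (pi \o s).

(* g^* [alpha] = [alpha] in H^1(X;R): g^* alpha - alpha is a coboundary *)
Definition preserves_class {X : topologicalType} (alpha : (R -> X) -> R)
    (g : X -> X) : Prop :=
  exists f : X -> R, forall s : R -> X, simplex1 s ->
    alpha (g \o s) = alpha s + (f (s 1) - f (s 0)).

Definition path_connected (X : topologicalType) : Prop :=
  forall x y : X, exists2 s : R -> X, simplex1 s & s 0 = x /\ s 1 = y.
End Defs.

Definition homeo {X Y : topologicalType} (f : X -> Y) : Prop :=
  continuous f /\ exists f' : Y -> X,
    [/\ cancel f f', cancel f' f & continuous f'].

Definition principal_bundle {R : realType} {X Y : topologicalType} (c : coef)
    (pi : Y -> X) (T : R -> Y -> Y) : Prop :=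
  [/\ continuous pi,
    (forall r, inA c r -> continuous (T r)),
    (forall y, T 0 y = y),
    (forall r s y, inA c r -> inA c s -> T (r + s) y = T r (T s y)) &
    [/\ (forall r y, inA c r -> pi (T r y) = pi y),
      (forall y y', pi y = pi y' -> exists2 r, inA c r & y' = T r y),
      (forall r y, inA c r -> T r y = y -> r = 0) &
      (* local triviality: pi^-1(U) = disjoint union over r in A of the open
         sets T r (s U), each mapped homeomorphically onto U by pi *)
      (forall x : X, exists U : set X, [/\ open U, U x &
         exists s : X -> Y, [/\ {within U, continuous s},
           (forall u, U u -> pi (s u) = u) &
           (forall r, inA c r -> open (T r @` (s @` U)))]])]].

Definition bundle_aut {R : realType} {X Y : topologicalType} (c : coef)
    (pi : Y -> X) (T : R -> Y -> Y) (gh : Y -> Y) (g : X -> X) : Prop :=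
  [/\ homeo gh, (forall y, pi (gh y) = g (pi y)) &
      (forall r y, inA c r -> gh (T r y) = T r (gh y))].

Definition rho {R : realType} {X Y : Type} (pi : Y -> X) (theta : Y -> R)
    (gh : Y -> Y) (x : X) : R :=
  match pselect (exists y, pi y = x) with
  | left h => let y := proj1_sig (cid h) in theta (gh y) - theta y
  | right _ => 0
  end.

Notation borel X := (g_sigma_algebraType (@open X)).

Definition invariant_measure {R : realType} {X : ptopologicalType}
    (mu : probability (borel X) R) (g : X -> X) : Prop :=
  forall B : set (borel X), measurable B -> mu (g @^-1` B) = mu B.

From HB Require Import structures.
From mathcomp Require Import all_boot all_order all_algebra.
From mathcomp Require Import all_classical all_reals all_analysis.
From mathcomp Require Import measurable_realfun.
Set Implicit Arguments. Unset Strict Implicit. Unset Printing Implicit Defensive.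
Import Order.TTheory GRing.Theory Num.Theory.
Import numFieldNormedType.Exports.
Local Open Scope classical_set_scope.
Local Open Scope ring_scope.

(** Over a point [x = pi y], an equivariant lift [f] of a map fixing [x]
    sends [y] to a translate [T r y], so [f^n y = T (n r) y] and
    [rho (f^n) x = n r] exactly; the rotation numbers at [x] are therefore
    [rho] itself, which is additive at a common fixed point by the cocycle
    identity [rho (f \o f') x = rho f (h x) + rho f' x], where [f'] covers [h].
    Integrating that identity against a common invariant measure, the
    [h]-invariance of [mu] turns the first term into [\int rho f]. *)

Section CoefficientGroup.
Context {R : realType} (c : coef).

Lemma inA0 : @inA R c 0.
Proof. by case: c => //=; rewrite rpred0. Qed.

Lemma inAD (r s : R) : inA c r -> inA c s -> inA c (r + s).
Proof. by case: c => //= ? ?; rewrite rpredD. Qed.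

Lemma inAMn (r : R) n : inA c r -> inA c (r *+ n).
Proof.
move=> Ar; elim: n => [|n IHn]; first by rewrite mulr0n; apply: inA0.
by rewrite mulrSr; apply: inAD.
Qed.

End CoefficientGroup.

Lemma cvg_mulrn_divn {R : realType} (r : R) :
  (fun n : nat => r *+ n / n%:R) @ \oo --> r.
Proof.
apply: cvg_near_cst; near=> n.
rewrite -[r *+ n]mulr_natr mulfK // pnatr_eq0 -lt0n.
by near: n; exists 1%N.
Unshelve. all: by end_near.
Qed.

Section Displacement.
Context {R : realType} {X Y : Type} (c : coef) (pi : Y -> X)
  (T : R -> Y -> Y) (theta : Y -> R).
Hypothesis T0 : forall y, T 0 y = y.
Hypothesis TD : forall r s y, inA c r -> inA c s -> T (r + s) y = T r (T s y).
Hypothesis pi_surj : forall x, exists y, pi y = x.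
Hypothesis fiberT : forall y y', pi y = pi y' -> exists2 r, inA c r & y' = T r y.
Hypothesis thetaT : forall r y, inA c r -> theta (T r y) = theta y + r.

Definition equivariant (f : Y -> Y) :=
  forall r y, inA c r -> f (T r y) = T r (f y).

Definition covers (f : Y -> Y) (g : X -> X) := forall y, pi (f y) = g (pi y).

Lemma equivariant_iter f n : equivariant f -> equivariant (iter n f).
Proof. by move=> fT r y Ar; elim: n => //= n ->; rewrite fT. Qed.

Lemma equivariant_comp f f' :
  equivariant f -> equivariant f' -> equivariant (f \o f').
Proof. by move=> fT f'T r y Ar /=; rewrite f'T // fT. Qed.

Lemma rhoE f y : equivariant f -> rho pi theta f (pi y) = theta (f y) - theta y.
Proof.
move=> fT; rewrite /rho; case: pselect => [hx|[]]; last by exists y.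
case: (cid hx) => /= y0 /fiberT [r Ar ->].
by rewrite fT // !thetaT // opprD addrACA subrr addr0.
Qed.

Lemma rho_comp f f' h : equivariant f -> equivariant f' -> covers f' h ->
  forall x, rho pi theta (f \o f') x = rho pi theta f (h x) + rho pi theta f' x.
Proof.
move=> fT f'T f'h x; have [y <-] := pi_surj x.
rewrite -f'h !rhoE //=; first by rewrite addrA subrK.
exact: equivariant_comp.
Qed.

Lemma iter_translate f y r :
  equivariant f -> inA c r -> f y = T r y -> forall n, iter n f y = T (r *+ n) y.
Proof.
move=> fT Ar fy; elim=> [|n IHn] /=; first by rewrite mulr0n T0.
have Arn : inA c (r *+ n) by apply: inAMn.
by rewrite IHn fT // fy -TD // mulrSr.
Qed.

Lemma rho_iter_fixpoint f g x : equivariant f -> covers f g -> g x = x ->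
  forall n, rho pi theta (iter n f) x = rho pi theta f x *+ n.
Proof.
move=> fT fg gx n; have [y yx] := pi_surj x.
have [r Ar fy] : exists2 r, inA c r & f y = T r y by apply: fiberT; rewrite fg yx.
have Arn : inA c (r *+ n) by apply: inAMn.
rewrite -yx !rhoE //; last exact: equivariant_iter.
by rewrite (iter_translate fT Ar fy n) fy !thetaT // !(addrC (theta y)) !addrK.
Qed.

Lemma cvg_rho_iter_fixpoint f g x : equivariant f -> covers f g -> g x = x ->
  (fun n : nat => rho pi theta (iter n f) x / n%:R) @ \oo --> rho pi theta f x.
Proof.
move=> fT fg gx; under eq_fun do rewrite (rho_iter_fixpoint fT fg gx).
exact: cvg_mulrn_divn.
Qed.

End Displacement.

Lemma principal_bundle_surj {R : realType} {X Y : topologicalType} c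
    (pi : Y -> X) (T : R -> Y -> Y) :
  principal_bundle c pi T -> forall x, exists y, pi y = x.
Proof.
case=> _ _ _ _ [_ _ _ loc] x.
by have [U [_ Ux [s [_ ps _]]]] := loc x; exists (s x); apply: ps.
Qed.

Lemma continuous_borel_measurable (X Y : ptopologicalType) (f : X -> Y) :
  continuous f -> measurable_fun setT (f : borel X -> borel Y).
Proof.
move=> cf; apply: (@measurability _ _ (borel X) (borel Y) setT f (@open Y)) => //.
move=> _ [B oB <-].
by apply: sub_gen_smallest; rewrite setTI; apply: open_comp.
Qed.

Lemma integral_comp_invariant d (T : measurableType d) (R : realType)
    (mu : {measure set T -> \bar R}) (h : T -> T) (f : T -> \bar R) :
  measurable_fun setT h -> (forall B, measurable B -> mu (h @^-1` B) = mu B) ->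
  measurable_fun setT f -> mu.-integrable setT (f \o h) ->
  (\int[mu]_x f (h x) = \int[mu]_x f x)%E.
Proof.
move=> mh mu_h mf ifh.
transitivity (\int[mu]_(x in h @^-1` setT) (f \o h) x)%E; first by [].
rewrite -(integral_pushforward mh mf ifh) //.
by apply: eq_measure_integral => A mA _; apply: mu_h.
Qed.

Theorem proposition2p8 (R : realType) (X : ptopologicalType) (Y : topologicalType)
    (c : coef) (pi : Y -> X) (T : R -> Y -> Y)
    (alpha : (R -> X) -> R) (theta : Y -> R)
    (g h : X -> X) (gh hh : Y -> Y) :
  @path_connected R X ->
  principal_bundle c pi T ->
  cocycle1 alpha ->
  d_theta_eq pi alpha theta ->
  (forall r y, inA c r -> theta (T r y) = theta y + r) ->
  homeo g -> preserves_class alpha g ->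
  homeo h -> preserves_class alpha h ->
  bundle_aut c pi T gh g ->
  bundle_aut c pi T hh h ->
  (* (1) common fixed point *)
  (forall x : X, g x = x -> h x = x ->
     exists rg rh : R,
       [/\ (fun n : nat => rho pi theta (iter n gh) x / n%:R) @ \oo --> rg,
           (fun n : nat => rho pi theta (iter n hh) x / n%:R) @ \oo --> rh &
           (fun n : nat => rho pi theta (iter n (gh \o hh)) x / n%:R) @ \oo
             --> rg + rh]) /\
  (* (2) common invariant Borel probability measure *)
  (forall mu : probability (borel X) R,
     invariant_measure mu g -> invariant_measure mu h ->
     mu.-integrable setT (fun x => (rho pi theta gh x)%:E) ->
     mu.-integrable setT (fun x => (rho pi theta hh x)%:E) ->
     mu.-integrable setT (fun x => (rho pi theta (gh \o hh) x)%:E) ->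
     (\int[mu]_x (rho pi theta (gh \o hh) x)%:E =
        \int[mu]_x (rho pi theta gh x)%:E + \int[mu]_x (rho pi theta hh x)%:E)%E).
Proof.
move=> _ bundle _ _ thetaT _ _ [ch _] _ [_ gh_g ghT] [_ hh_h hhT].
have pi_surj := principal_bundle_surj bundle.
case: bundle => _ _ T0 TD [_ fiberT _ _].
have rho_gh_hh := rho_comp pi_surj fiberT thetaT ghT hhT hh_h.
have cvg_rot := cvg_rho_iter_fixpoint T0 TD pi_surj fiberT thetaT.
split=> [x gx hx | mu _ mu_h igh ihh ighh].
  exists (rho pi theta gh x), (rho pi theta hh x); split; [exact: cvg_rot..|].
  have -> : rho pi theta gh x + rho pi theta hh x = rho pi theta (gh \o hh) x.
    by rewrite rho_gh_hh hx.
  apply: (cvg_rot _ (g \o h)).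
  - exact: equivariant_comp.
  - by move=> y /=; rewrite gh_g hh_h.
  - by rewrite /= hx gx.
have igh_h : mu.-integrable setT (fun x => (rho pi theta gh (h x))%:E).
  rewrite (_ : (fun x => _) = (fun x => (rho pi theta (gh \o hh) x)%:E) \-
    (fun x => (rho pi theta hh x)%:E))%E; first exact: integrableB.
  by apply/funext => x /=; rewrite rho_gh_hh -EFinB addrK.
under eq_integral do rewrite rho_gh_hh EFinD.
rewrite integralD //; congr (_ + _)%E.
apply: integral_comp_invariant (measurable_int _ igh) igh_h.
- exact: continuous_borel_measurable.
- by move=> B mB; apply: mu_h.
Qed.
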